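(* Let $L\in\mathbb{R}^{n\times n}$ be the Laplacian of an undirected unweighted graph on $n$ nodes, let $s \in \mathbb{R}^n$ be a mean-zero innate opinion vector and $z = (I+L)^{-1}s$. Let $u\neq v$ be two nodes not joined by an edge, let $E = \chi_{u,v}\chi_{u,v}^T$ be the edge Laplacian of $(u,v)$, and let $\delta = z(u)-z(v)$. Then $$PD(L) - \delta^2 \le PD(L+E) \le PD(L) - \frac{\delta^2}{3}.$$
   Context: $\chi_{u,v}\in\mathbb{R}^n$ is the vector with $1$ in coordinate $u$, $-1$ in coordinate $v$ and $0$ elsewhere. Friedkin–Johnsen model: expressed opinions $z=(I+L)^{-1}s$. With $s$ fixed, the polarization+disagreement of a graph with Laplacian $M$ is $PD(M) = s^T (I+M)^{-1} s$. *)

From mathcomp Require Import all_boot all_order all_algebra.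
Set Implicit Arguments. Unset Strict Implicit. Unset Printing Implicit Defensive.
Import Order.TTheory GRing.Theory Num.Theory.
Local Open Scope ring_scope.

Definition simple_graph (n : nat) (adj : rel 'I_n) : Prop :=
  symmetric adj /\ irreflexive adj.

Definition gdeg (R : ringType) (n : nat) (adj : rel 'I_n) (i : 'I_n) : R :=
  (#|[set j | adj i j]|)%:R.

Definition laplacian (R : ringType) (n : nat) (adj : rel 'I_n) : 'M[R]_n :=
  \matrix_(i, j) (if i == j then gdeg R adj i else if adj i j then -1 else 0).

Definition chi (R : ringType) (n : nat) (u v : 'I_n) : 'cV[R]_n :=
  \col_i ((i == u)%:R - (i == v)%:R).

Definition PD (R : fieldType) (n : nat) (s : 'cV[R]_n) (M : 'M[R]_n) : R :=
  (s^T *m invmx (1%:M + M) *m s) 0 0.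

Definition fj_opinions (R : fieldType) (n : nat) (s : 'cV[R]_n) (L : 'M[R]_n)
  : 'cV[R]_n := invmx (1%:M + L) *m s.

From mathcomp Require Import all_boot all_order all_algebra ring lra.
Set Implicit Arguments. Unset Strict Implicit. Unset Printing Implicit Defensive.
Import Order.TTheory GRing.Theory Num.Theory.
Local Open Scope ring_scope.

(* Sherman-Morrison: with M = I + L, w = M^-1 chi_{u,v} and r = chi_{u,v}^T w,
   adding the edge gives PD(L + E) = PD(L) - delta^2 / (1 + r).  Since L is
   positive semidefinite, M >= I and so 0 <= r <= chi_{u,v}^T chi_{u,v} = 2,
   whence delta^2 / 3 <= delta^2 / (1 + r) <= delta^2. *)

Definition dot (R : pzRingType) n (x y : 'cV[R]_n) : R := (x^T *m y) 0 0.

Lemma dotC (R : comPzRingType) n (x y : 'cV[R]_n) : dot x y = dot y x.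
Proof. by rewrite /dot -[y^T *m x]trmxK trmx_mul trmxK [RHS]mxE. Qed.

Lemma dotDl (R : pzRingType) n (x y w : 'cV[R]_n) :
  dot (x + y) w = dot x w + dot y w.
Proof. by rewrite /dot linearD /= mulmxDl mxE. Qed.

Lemma dotDr (R : pzRingType) n (x y w : 'cV[R]_n) :
  dot w (x + y) = dot w x + dot w y.
Proof. by rewrite /dot mulmxDr mxE. Qed.

Lemma dotZr (R : comPzRingType) n (a : R) (x y : 'cV[R]_n) :
  dot x (a *: y) = a * dot x y.
Proof. by rewrite /dot -scalemxAr mxE. Qed.

Lemma dot_mulmx (R : comPzRingType) n (A : 'M[R]_n) (x y : 'cV[R]_n) :
  dot x (A *m y) = dot (A^T *m x) y.
Proof. by rewrite /dot trmx_mul trmxK mulmxA. Qed.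

Lemma dotxx_ge0 (R : realFieldType) n (x : 'cV[R]_n) : 0 <= dot x x.
Proof. by rewrite /dot mxE sumr_ge0 // => i _; rewrite mxE -expr2 sqr_ge0. Qed.

Lemma dotxx_eq0 (R : realFieldType) n (x : 'cV[R]_n) : dot x x = 0 -> x = 0.
Proof.
have x2_ge0 i : 0 <= x^T 0 i * x i 0 by rewrite mxE -expr2 sqr_ge0.
rewrite /dot mxE => /psumr_eq0P x2_eq0.
apply/matrixP => i j; have /eqP := x2_eq0 (fun k _ => x2_ge0 k) i isT.
by rewrite (ord1 j) !mxE mulf_eq0 orbb => /eqP.
Qed.

Lemma mul_rank_one (R : comPzRingType) n (c x : 'cV[R]_n) :
  c *m c^T *m x = dot c x *: c.
Proof. by rewrite -mulmxA [c^T *m x]mx11_scalar mul_mx_scalar. Qed.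

Lemma injective_unitmx (F : fieldType) n (A : 'M[F]_n) :
  (forall x : 'cV_n, A *m x = 0 -> x = 0) -> A \in unitmx.
Proof.
move=> Ainj; rewrite -unitmx_tr -row_free_unit -kermx_eq0; apply/eqP.
apply/row_matrixP => i; rewrite row0; apply: trmx_inj; rewrite trmx0.
by apply: Ainj; rewrite -{1}[A]trmxK -trmx_mul -row_mul mulmx_ker row0 trmx0.
Qed.

Lemma coercive_unitmx (R : realFieldType) n (A : 'M[R]_n) :
  (forall x : 'cV_n, dot x x <= dot x (A *m x)) -> A \in unitmx.
Proof.
move=> Acoer; apply: injective_unitmx => x Ax0; apply: dotxx_eq0.
have Ax_dot0 : dot x (A *m x) = 0 by rewrite Ax0 /dot mulmx0 mxE.
by apply/eqP; rewrite eq_le dotxx_ge0 -Ax_dot0 Acoer.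
Qed.

Section Laplacian.

Variables (R : realFieldType) (n : nat) (adj : rel 'I_n).
Hypothesis adj_simple : simple_graph adj.

Let a i j : R := (adj i j)%:R.

Lemma laplacianE i j :
  laplacian R adj i j = (i == j)%:R * \sum_k a i k - a i j.
Proof.
have [_ adj_irr] := adj_simple.
have -> : \sum_k a i k = gdeg R adj i.
  rewrite /gdeg -sum1dep_card natr_sum [RHS]big_mkcond.
  by apply: eq_bigr => k _; rewrite /a; case: (adj i k).
rewrite mxE /a; case: eqP => [->|_]; first by rewrite adj_irr mul1r subr0.
by rewrite mul0r sub0r; case: (adj i j); rewrite ?oppr0.
Qed.

Lemma tr_laplacian : (laplacian R adj)^T = laplacian R adj.
Proof.
have [adj_sym _] := adj_simple.
apply/matrixP => i j; rewrite mxE !laplacianE /a adj_sym eq_sym.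
by case: eqP => [->|]; rewrite ?mul0r.
Qed.

Lemma laplacian_quad_form (x : 'cV[R]_n) :
  dot x (laplacian R adj *m x) =
  \sum_i \sum_j a i j * (x i 0 * x i 0 - x i 0 * x j 0).
Proof.
rewrite /dot mulmxA mxE; under eq_bigr do rewrite mxE big_distrl /=.
rewrite exchange_big; apply: eq_bigr => i _ /=.
under eq_bigr do rewrite mxE laplacianE mulrBr mulrBl.
under [RHS]eq_bigr do rewrite mulrBr.
rewrite !sumrB -big_distrl /=; congr (_ - _); last first.
  by apply: eq_bigr => j _; ring.
rewrite [LHS](bigD1 i) //= [X in _ + X]big1 => [|j ji]; last first.
  by rewrite eq_sym (negbTE ji) mul0r mulr0 mul0r.
by rewrite eqxx mul1r addr0; ring.
Qed.

(* Symmetrising the double sum gives 2 x^T L x = sum_ij a_ij (x_i - x_j)^2. *)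
Lemma laplacian_psd (x : 'cV[R]_n) : 0 <= dot x (laplacian R adj *m x).
Proof.
have [adj_sym _] := adj_simple.
have quad_swap : dot x (laplacian R adj *m x) =
    \sum_i \sum_j a i j * (x j 0 * x j 0 - x j 0 * x i 0).
  rewrite laplacian_quad_form exchange_big.
  by apply: eq_bigr => i _; apply: eq_bigr => j _; rewrite /a adj_sym.
have quad2 : dot x (laplacian R adj *m x) + dot x (laplacian R adj *m x) =
    \sum_i \sum_j a i j * (x i 0 - x j 0) ^+ 2.
  rewrite {1}laplacian_quad_form quad_swap -big_split; apply: eq_bigr => i _.
  by rewrite -big_split; apply: eq_bigr => j _ /=; ring.
rewrite -(pmulrn_lge0 _ (isT : 0 < 2)%N) mulr2n quad2.
rewrite sumr_ge0 // => i _; rewrite sumr_ge0 // => j _.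
by rewrite mulr_ge0 ?ler0n ?sqr_ge0.
Qed.

End Laplacian.

Lemma sherman_morrison (F : fieldType) n (M : 'M[F]_n) (c s : 'cV[F]_n) :
  M \in unitmx -> M + c *m c^T \in unitmx ->
  1 + dot c (invmx M *m c) != 0 ->
  invmx (M + c *m c^T) *m s =
  invmx M *m s
  - (dot c (invmx M *m s) / (1 + dot c (invmx M *m c))) *: (invmx M *m c).
Proof.
move=> Mu Nu r1_neq0; set alpha := _ / _.
have alphaE : alpha * (1 + dot c (invmx M *m c)) = dot c (invmx M *m s).
  by rewrite divfK.
apply: (canLR (mulKmx Nu)).
rewrite mulmxDl mul_rank_one mulmxBr -scalemxAr !mulKVmx //.
rewrite -!scaleNr dotDr dotZr -addrA -scalerDl.
have -> : - alpha + (dot c (invmx M *m s) + - alpha * dot c (invmx M *m c)) = 0.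
  by rewrite -alphaE; ring.
by rewrite scale0r addr0.
Qed.

Lemma PD_dot (F : fieldType) n (s : 'cV[F]_n) (L : 'M[F]_n) :
  PD s L = dot s (fj_opinions s L).
Proof. by rewrite /PD /dot /fj_opinions mulmxA. Qed.

Section RankOneUpdate.

Variables (R : realFieldType) (n : nat) (L : 'M[R]_n).
Hypothesis L_sym : L^T = L.
Hypothesis L_psd : forall x : 'cV[R]_n, 0 <= dot x (L *m x).

Lemma id_add_psd_coercive (x : 'cV[R]_n) : dot x x <= dot x ((1%:M + L) *m x).
Proof. by rewrite mulmxDl mul1mx dotDr lerDl. Qed.

Lemma unitmx_id_add_psd : 1%:M + L \in unitmx.
Proof. exact: coercive_unitmx id_add_psd_coercive. Qed.

(* With w := (I + L)^-1 c we have c = w + L w, so c^T w = w^T w + w^T L w and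
   c^T c - c^T w = w^T L w + |L w|^2. *)
Lemma fj_opinions_gain_bounds (c : 'cV[R]_n) :
  0 <= dot c (fj_opinions c L) <= dot c c.
Proof.
set w := fj_opinions c L.
have cE : c = w + L *m w.
  by rewrite -{1}[w]mul1mx -mulmxDl mulKVmx ?unitmx_id_add_psd.
have wLw := L_psd w; have LwLw := dotxx_ge0 (L *m w); have ww := dotxx_ge0 w.
rewrite cE !dotDl !dotDr [dot (L *m w) w]dotC.
by apply/andP; split; lra.
Qed.

Lemma PD_add_rank_one (c s : 'cV[R]_n) :
  PD s (L + c *m c^T) =
  PD s L - dot c (fj_opinions s L) ^+ 2 / (1 + dot c (fj_opinions c L)).
Proof.
have Mu := unitmx_id_add_psd.
have [r_ge0 _] := andP (fj_opinions_gain_bounds c).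
have Nu : 1%:M + L + c *m c^T \in unitmx.
  apply: coercive_unitmx => x; rewrite mulmxDl mul_rank_one dotDr dotZr.
  by rewrite [dot x c]dotC -expr2 ler_wpDr ?sqr_ge0 ?id_add_psd_coercive.
rewrite !PD_dot /fj_opinions addrA sherman_morrison ?gt_eqF ?ltr_wpDr //.
rewrite -scaleNr dotDr dotZr [dot s (_ *m c)]dot_mulmx [dot _ c]dotC.
by rewrite trmx_inv linearD /= tr_scalar_mx L_sym mulNr mulrAC -expr2.
Qed.

End RankOneUpdate.

Lemma chi_delta (R : nzRingType) n (u v : 'I_n) :
  chi R u v = delta_mx u 0 - delta_mx v 0.
Proof. by apply/matrixP => i j; rewrite (ord1 j) !mxE !andbT. Qed.

Lemma dot_chi (R : nzRingType) n (u v : 'I_n) (x : 'cV[R]_n) :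
  dot (chi R u v) x = x u 0 - x v 0.
Proof.
by rewrite chi_delta /dot linearB /= mulmxBl !trmx_delta -!rowE !mxE.
Qed.

Lemma dot_chi_chi (R : nzRingType) n (u v : 'I_n) :
  u != v -> dot (chi R u v) (chi R u v) = 2%:R.
Proof.
move=> uv; rewrite dot_chi !mxE !eqxx (negbTE uv) eq_sym (negbTE uv).
by rewrite subr0 sub0r opprK.
Qed.

Theorem mainTheorem4 (R : realFieldType) (n : nat) (adj : rel 'I_n)
  (s : 'cV[R]_n) (u v : 'I_n) :
  simple_graph adj ->
  \sum_(i < n) s i 0 = 0 ->
  u != v -> ~~ adj u v ->
  let L := laplacian R adj in
  let E := chi R u v *m (chi R u v)^T in
  let z := fj_opinions s L in
  let delta := z u 0 - z v 0 in
  PD s L - delta ^+ 2 <= PD s (L + E) <= PD s L - delta ^+ 2 / 3%:R.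
Proof.
move=> adj_simple _ uv _; cbv zeta.
have L_psd := laplacian_psd (R := R) adj_simple.
have /andP[r_ge0] := fj_opinions_gain_bounds L_psd (chi R u v).
rewrite dot_chi_chi // => r_le2.
rewrite (PD_add_rank_one (tr_laplacian R adj_simple) L_psd) dot_chi.
set z := fj_opinions s _; set delta := z u 0 - z v 0.
set r := dot _ _ in r_ge0 r_le2 *; set t := _ / _.
have r1_gt0 : 0 < 1 + r by rewrite ltr_wpDr.
have t_ge0 : 0 <= t by rewrite divr_ge0 ?sqr_ge0 ?ltW.
have tE : t * (1 + r) = delta ^+ 2 by rewrite divfK ?gt_eqF.
rewrite -tE; apply/andP; split; nra.
Qed.
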